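(* Let $G=(V_1,V_2,E)$ be a biregular graph. Then $\mathcal{A}(G)\cong\mathcal{A}_{RW}(G)$.
   Context: Graphs are simple (no loops or multiple edges), connected, with countable (finite or infinite) vertex set $V$, and locally finite ($\deg(i)<\infty$ for all $i$, where $\deg(i)$ is the number of neighbors of $i$). The adjacency matrix is $A=(a_{ij})$ with $a_{ij}=1$ if $i,j$ are neighbors and $0$ otherwise. A graph is biregular if it is bipartite with bipartition $V=V_1\sqcup V_2$ (every edge joins $V_1$ to $V_2$) such that all vertices of $V_1$ have a common degree $d_1$ and all vertices of $V_2$ have a common degree $d_2$. An evolution algebra over $\mathbb{R}$ is an algebra with a countable basis $\{e_i\}$ (natural basis) such that $e_i\cdot e_j=0$ for $i\ne j$ and $e_i\cdot e_i=\sum_k c_{ik}e_k$. $\mathcal{A}(G)$ has natural basis $\{e_i:i\in V\}$ with $e_i\cdot e_i=\sum_{k\in V}a_{ik}e_k$; $\mathcal{A}_{RW}(G)$ has natural basis $\{e_i:i\in V\}$ with $e_i\cdot e_i=\sum_{k\in V}\frac{a_{ik}}{\deg(i)}e_k$; in both, $e_i\cdot e_j=0$ for $i\ne j$. $\cong$ denotes algebra isomorphism. *)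

From HB Require Import structures.
From mathcomp Require Import all_boot all_order all_algebra.
From mathcomp Require Import boolp classical_sets functions cardinality fsbigop.
From mathcomp Require Import finmap reals Rstruct.
From Stdlib Require Import Rdefinitions.
Set Implicit Arguments. Unset Strict Implicit. Unset Printing Implicit Defensive.
Import Order.TTheory GRing.Theory Num.Theory.
Local Open Scope classical_set_scope.
Local Open Scope ring_scope.

Section Graphs.
Variable V : countType.
Implicit Type adj : rel V.

(* simple: symmetric, no loops (multiple edges impossible for a relation) *)
Definition simple_graph adj := symmetric adj /\ irreflexive adj.

Definition neighbors adj (i : V) : set V := [set j | adj i j].

Definition locally_finite adj := forall i : V, finite_set (neighbors adj i).

Definition connected_graph adj :=
  forall i j : V, exists p : seq V, path adj i p /\ last i p = j.

Definition deg adj (i : V) : nat := (#|` fset_set (neighbors adj i) |)%fset.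

Definition biregular adj :=
  exists (V1 : set V) (d1 d2 : nat),
    (forall i j, adj i j -> (V1 i <-> ~ V1 j)) /\
    (forall i, V1 i -> deg adj i = d1) /\
    (forall i, ~ V1 i -> deg adj i = d2).

(* An element sum_i x_i e_i is represented by its finitely supported
   coefficient function x : V -> R. *)
Definition finsupp (x : V -> R) := finite_set [set i | x i != 0].

(* e_i e_j = 0 (i <> j), e_i e_i = sum_k c i k e_k; hence
   (sum x_i e_i)(sum y_j e_j) = sum_k (sum_i x_i y_i c_ik) e_k. *)
Definition ev_mul (c : V -> V -> R) (x y : V -> R) : V -> R :=
  fun k => \sum_(i \in [set i | x i != 0]) (x i * y i * c i k).

Definition c_adj adj : V -> V -> R := fun i k => if adj i k then 1 else 0.
Definition c_rw adj : V -> V -> R :=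
  fun i k => (if adj i k then 1 else 0) / (deg adj i)%:R.

Definition ev_alg_iso (c1 c2 : V -> V -> R) :=
  exists f : (V -> R) -> (V -> R),
    [/\ (forall x, finsupp x -> finsupp (f x)),
        (forall (a : R) x y, finsupp x -> finsupp y ->
            f (fun k => a * x k + y k) = (fun k => a * f x k + f y k)),
        (forall x y, finsupp x -> finsupp y -> f x = f y -> x = y),
        (forall z, finsupp z -> exists2 x, finsupp x & f x = z) &
        (forall x y, finsupp x -> finsupp y ->
            f (ev_mul c1 x y) = ev_mul c2 (f x) (f y))].

End Graphs.

(* The diagonal change of basis e_i |-> a_i e_i is an isomorphism between
   evolution algebras with structure constants c and c' as soon as
   a_k c_ik = a_i^2 c'_ik.  For a biregular graph take a constant on each
   side, a on V1 and b on V2: the condition reads b = a^2/d1 and a = b^2/d2,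
   solved by a = p^2 q, b = p q^2 with p^3 = d1 and q^3 = d2. *)
From Pilot Require Import Defs.
From mathcomp Require Import all_boot all_order all_algebra.
From mathcomp Require Import boolp classical_sets cardinality.
From Stdlib Require Import Reals Lra.
From mathcomp Require Import fsbigop finmap Rstruct ring.

Set Implicit Arguments.
Unset Strict Implicit.
Unset Printing Implicit Defensive.
Import Order.TTheory GRing.Theory Num.Theory.
Local Open Scope classical_set_scope.
Local Open Scope ring_scope.

Lemma exists_cube_root (x : R) : 0 < x -> exists2 p : R, 0 < p & p ^+ 3 = x.
Proof.
move=> /RltP x_gt0; exists (Rpower x (1/3)).
  by apply/RltP; apply: exp_pos.
rewrite (_ : _ ^+ 3 = Rpower x (1/3) * (Rpower x (1/3) * Rpower x (1/3))) //.
rewrite -!RmultE -!Rpower_plus (_ : (1/3 + (1/3 + 1/3))%R = 1%R) ?Rpower_1 //.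
lra.
Qed.

Section DiagonalScaling.
Variables (V : countType) (c c' : V -> V -> R) (a : V -> R).
Hypothesis a_neq0 : forall i, a i != 0.
Hypothesis a_structure : forall i k, a k * c i k = a i ^+ 2 * c' i k.

Lemma support_scale (b : V -> R) (x : V -> R) : (forall i, b i != 0) ->
  [set i | b i * x i != 0] = [set i | x i != 0].
Proof.
by move=> b_neq0; apply/seteqP; split=> i /=; rewrite mulf_eq0 negb_or b_neq0.
Qed.

Lemma ev_mul_scale (x y : V -> R) : Defs.finsupp x ->
  (fun k => a k * ev_mul c x y k) =
  ev_mul c' (fun k => a k * x k) (fun k => a k * y k).
Proof.
move=> fx; apply/funext => k; rewrite /ev_mul support_scale // fsbig_distrr //.
by apply: eq_fsbigr => i _ /=; rewrite mulrCA a_structure; ring.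
Qed.

Lemma ev_alg_iso_scale : ev_alg_iso c c'.
Proof.
have ainv_neq0 i : (a i)^-1 != 0 by rewrite invr_eq0.
exists (fun x k => a k * x k); split.
- by move=> x; rewrite /Defs.finsupp support_scale.
- by move=> r x y _ _; apply/funext => k; ring.
- move=> x y _ _ eq_ax; apply/funext => k; apply: (mulfI (a_neq0 k)).
  exact: (congr1 (fun f => f k) eq_ax).
- move=> z fz; exists (fun k => (a k)^-1 * z k).
    by rewrite /Defs.finsupp support_scale.
  by apply/funext => k; rewrite mulrA mulfV ?mul1r.
- by move=> x y fx _; apply: ev_mul_scale.
Qed.

End DiagonalScaling.

Lemma deg_gt0 (V : countType) (adj : rel V) (i k : V) :
  locally_finite adj -> adj i k -> (0 < deg adj i)%nat.
Proof.
move=> lf adj_ik; rewrite /deg cardfs_gt0; apply/fset0Pn; exists k.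
by rewrite in_fset_set //; apply/mem_set.
Qed.

Lemma biregular_rw_scaling (V : countType) (adj : rel V) :
  locally_finite adj -> biregular adj ->
  exists2 a : V -> R, forall i, a i != 0 &
    forall i k, a k * c_adj adj i k = a i ^+ 2 * c_rw adj i k.
Proof.
move=> lf [V1 [d1 [d2 [bip [deg1 deg2]]]]].
(* [maxn d 1] keeps the cube roots positive; it differs from [d] only on a
   side without edges. *)
have [p p_gt0 p3] : exists2 p : R, 0 < p & p ^+ 3 = (maxn d1 1)%:R.
  by apply: exists_cube_root; rewrite ltr0n leq_max orbT.
have [q q_gt0 q3] : exists2 q : R, 0 < q & q ^+ 3 = (maxn d2 1)%:R.
  by apply: exists_cube_root; rewrite ltr0n leq_max orbT.
have [p_neq0 q_neq0] : p != 0 /\ q != 0 by rewrite !gt_eqF.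
pose a i := if asbool (V1 i) then p ^+ 2 * q else p * q ^+ 2.
exists a => [i|i k].
  by rewrite /a; case: asboolP => _; rewrite !mulf_neq0 ?expf_neq0.
rewrite /c_adj /c_rw; case: (boolP (adj i k)) => [adj_ik|];
  last by rewrite /= mul0r !mulr0.
have := deg_gt0 lf adj_ik; have /= side_ik := bip i k adj_ik.
rewrite /a; case: (asboolP (V1 i)) => V1i.
  have V1k : ~ V1 k by apply/side_ik.
  case: asboolP => // _; rewrite deg1 // => d1_gt0.
  by rewrite -[d1](maxn_idPl d1_gt0) -p3; field.
have V1k : V1 k by apply: contrapT => V1k; apply/V1i/side_ik.
case: asboolP => // _; rewrite deg2 // => d2_gt0.
by rewrite -[d2](maxn_idPl d2_gt0) -q3; field.
Qed.

Theorem proposition2p10 (V : countType) (adj : rel V) :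
  simple_graph adj -> locally_finite adj -> connected_graph adj ->
  biregular adj ->
  ev_alg_iso (c_adj adj) (c_rw adj).
Proof.
move=> _ lf _ breg; have [a a_neq0 a_structure] := biregular_rw_scaling lf breg.
exact: ev_alg_iso_scale a_neq0 a_structure.
Qed.
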